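(* Assume (A1) and (A3). Then for every $\bar\alpha\in\{0,1\}^m$ and every $i\in\{1,\dots,m\}$, the nonstandard derivative $[D^{NS}J(\bar\alpha)]_i$ exists (the defining one-sided limit exists), is unique and finite, and $$[D^{NS}J(\bar\alpha)]_i=\int_0^T\Big(\big(f(x^{\bar\alpha}(t),\bar\alpha+\mathbf 1_i)-f(x^{\bar\alpha}(t),\bar\alpha)\big)^\top\lambda^{\bar\alpha}(t)+r(x^{\bar\alpha}(t),\bar\alpha+\mathbf 1_i)-r(x^{\bar\alpha}(t),\bar\alpha)\Big)\,dt$$ if $\bar\alpha_i=0$, and $$[D^{NS}J(\bar\alpha)]_i=\int_0^T\Big(\big(f(x^{\bar\alpha}(t),\bar\alpha)-f(x^{\bar\alpha}(t),\bar\alpha-\mathbf 1_i)\big)^\top\lambda^{\bar\alpha}(t)+r(x^{\bar\alpha}(t),\bar\alpha)-r(x^{\bar\alpha}(t),\bar\alpha-\mathbf 1_i)\Big)\,dt$$ if $\bar\alpha_i=1$.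
   Context: Fix integers $n,m\ge 1$, a horizon $T>0$, a set $\mathcal X\subseteq\mathbb R^n$ and an initial state $\mathbf x\in\mathcal X$. Let $f:\mathbb R^n\times\mathbb R^m\to\mathbb R^n$, $r:\mathbb R^n\times\mathbb R^m\to\mathbb R$, $q:\mathbb R^n\to\mathbb R$. For $\beta\in\{0,1\}^m$, $x^\beta:[0,T]\to\mathbb R^n$ is the solution of $\dot x(t)=f(x(t),\beta)$, $x(0)=\mathbf x$ (assumed to exist uniquely on $[0,T]$). For a function $z:[0,T]\to\mathbb R^n$ in $L^2$ with a well-defined value $z(T)$ and $\beta\in\mathbb R^m$, set $\mathcal J(z,\beta)=\int_0^T r(z(t),\beta)\,dt+q(z(T))$; the payoff is $J(\beta)=\mathcal J(x^\beta,\beta)$. $\mathbf 1_i$ denotes the $i$-th standard basis vector of $\mathbb R^m$. (A1): for each $\alpha\in\{0,1\}^m$, $f(\cdot,\alpha)$ is twice differentiable with continuous second derivative and globally Lipschitz on $\mathcal X$. (A3): for each $\alpha\in\{0,1\}^m$, $r(\cdot,\alpha)$ and $q$ are continuously differentiable. Adjoint: for $\bar\alpha\in\{0,1\}^m$, $\lambda^{\bar\alpha}:[0,T]\to\mathbb R^n$ solves $-\dot\lambda(t)=\frac{\partial f}{\partial x}(x^{\bar\alpha}(t),\bar\alpha)^\top\lambda(t)+\frac{\partial r}{\partial x}(x^{\bar\alpha}(t),\bar\alpha)^\top$, $\lambda(T)=\frac{\partial q}{\partial x}(x^{\bar\alpha}(T))^\top$ (i.e. $-\dot\lambda=\partial_x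 H^\top$ with Hamiltonian $H(x,\lambda,\alpha)=\lambda^\top f(x,\alpha)+r(x,\alpha)$). $\epsilon$-variational system: for $\bar\alpha,\alpha\in\{0,1\}^m$ and $\epsilon\in[0,1]$, $x^{\epsilon(\bar\alpha,\alpha)}$ is the solution of $\dot x(t)=(1-\epsilon)f(x(t),\bar\alpha)+\epsilon f(x(t),\alpha)$, $x(0)=\mathbf x$, and $\mathcal J^{\epsilon(\bar\alpha,\alpha)}(z):=(1-\epsilon)\mathcal J(z,\bar\alpha)+\epsilon\mathcal J(z,\alpha)$. Nonstandard derivative: $[D^{NS}J(\bar\alpha)]_i:=\lim_{\epsilon\to0^+}\frac1\epsilon\big[\mathcal J^{\epsilon(\bar\alpha,\bar\alpha+\mathbf 1_i)}(x^{\epsilon(\bar\alpha,\bar\alpha+\mathbf 1_i)})-\mathcal J(x^{\bar\alpha},\bar\alpha)\big]$ if $\bar\alpha_i=0$, and $[D^{NS}J(\bar\alpha)]_i:=\lim_{\epsilon\to0^+}\frac1\epsilon\big[\mathcal J(x^{\bar\alpha},\bar\alpha)-\mathcal J^{\epsilon(\bar\alpha,\bar\alpha-\mathbf 1_i)}(x^{\epsilon(\bar\alpha,\bar\alpha-\mathbf 1_i)})\big]$ if $\bar\alpha_i=1$. *)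

From Stdlib Require Import Reals ClassicalEpsilon.
From mathcomp Require Import ssreflect ssrfun ssrbool eqtype ssrnat seq fintype bigop.
Set Implicit Arguments. Unset Strict Implicit.
Open Scope R_scope.

Definition vec (n : nat) := 'I_n -> R.

Definition vadd n (u v : vec n) : vec n := fun k => u k + v k.
Definition vsub n (u v : vec n) : vec n := fun k => u k - v k.
Definition vscale n (c : R) (u : vec n) : vec n := fun k => c * u k.
Definition dot n (u v : vec n) : R := \big[Rplus/0%R]_(k < n) (u k * v k).
Definition vnorm n (u : vec n) : R := sqrt (dot u u).

Definition ebasis m (i : 'I_m) : vec m := fun j => if j == i then 1 else 0.
Definition bctrl m (a : 'I_m -> bool) : vec m := fun j => if a j then 1 else 0.

Definition fdiff n (g : vec n -> R) (x grad : vec n) : Prop :=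
  forall eps, 0 < eps -> exists delta, 0 < delta /\
    forall h : vec n, vnorm h < delta ->
      Rabs (g (vadd x h) - g x - dot grad h) <= eps * vnorm h.

Definition vcont n (g : vec n -> R) (x : vec n) : Prop :=
  forall eps, 0 < eps -> exists delta, 0 < delta /\
    forall y : vec n, vnorm (vsub y x) < delta -> Rabs (g y - g x) < eps.

Definition lipschitz_on n (X : vec n -> Prop) (F : vec n -> vec n) : Prop :=
  exists K, forall y z, X y -> X z -> vnorm (vsub (F y) (F z)) <= K * vnorm (vsub y z).

Definition cont_on (a b : R) (g : R -> R) : Prop :=
  forall t, a <= t <= b -> limit1_in g (fun s => a <= s <= b) (g t) t.

Definition ode_sol n (T : R) (F : vec n -> vec n) (z0 : vec n) (z : R -> vec n) : Prop :=
  (forall k, z 0 k = z0 k) /\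
  (forall k, cont_on 0 T (fun t => z t k)) /\
  (forall t, 0 < t < T -> forall k, derivable_pt_lim (fun s => z s k) t (F (z t) k)).

(* Riemann integral over [a,b] (value when integrable; unspecified otherwise) *)
Definition integ (g : R -> R) (a b : R) : R :=
  epsilon (inhabits 0) (fun I => exists pr : Riemann_integrable g a b, RiemannInt pr = I).

Definition Jfun n m (T : R) (r : vec n -> vec m -> R) (q : vec n -> R)
  (z : R -> vec n) (beta : vec m) : R :=
  integ (fun t => r (z t) beta) 0 T + q (z T).

(* F : R^n -> R^n is twice differentiable with continuous second derivative,
   with (Frechet) derivative DF (DF x k = gradient of the k-th component)
   and second derivative D2F (D2F x k j = gradient of x |-> DF x k j) *)
Definition C2_with n (F : vec n -> vec n) (DF : vec n -> 'I_n -> vec n)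
  (D2F : vec n -> 'I_n -> 'I_n -> vec n) : Prop :=
  (forall x k, fdiff (fun y => F y k) x (DF x k)) /\
  (forall x k j, fdiff (fun y => DF y k j) x (D2F x k j)) /\
  (forall x k j l, vcont (fun y => D2F y k j l) x).

Definition C1_with n (g : vec n -> R) (Dg : vec n -> vec n) : Prop :=
  (forall x, fdiff g x (Dg x)) /\ (forall x k, vcont (fun y => Dg y k) x).

(* adjoint: -lam' = (df/dx)(z(t))^T lam + (dr/dx)(z(t))^T, lam(T) = (dq/dx)(z(T))^T,
   with z = x^abar; DFa, Dra are the derivatives of f(.,abar), r(.,abar) *)
Definition adjoint_sol n (T : R) (DFa : vec n -> 'I_n -> vec n) (Dra : vec n -> vec n)
  (Dq : vec n -> vec n) (z lam : R -> vec n) : Prop :=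
  (forall k, lam T k = Dq (z T) k) /\
  (forall k, cont_on 0 T (fun t => lam t k)) /\
  (forall t, 0 < t < T -> forall k,
     derivable_pt_lim (fun s => lam s k) t
       (- (\big[Rplus/0%R]_(j < n) (DFa (z t) j k * lam t j) + Dra (z t) k))).

From HB Require Import structures.
From Stdlib Require Import Reals ClassicalEpsilon FunctionalExtensionality Lra.
From mathcomp Require Import ssreflect ssrfun ssrbool eqtype ssrnat seq fintype bigop.
From Coquelicot Require Import Coquelicot.
Open Scope R_scope.
Set Implicit Arguments. Unset Strict Implicit.

(* Flipping bit [i] of [abar] gives a control [a'], and both cases of the
   theorem are the same difference quotient (up to sign) for the relaxed
   dynamics [(1 - e) f(., abar) + e f(., a')], whose trajectory we call [x^e].
   A Gronwall argument gives [|x^e - x^abar| = O(e)] uniformly on [0, T].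
   Along [x^e] the adjoint equation turns [t |-> lam t . (x^e t - x^abar t)]
   into an exact primitive; with [lam T = grad q (x^abar T)] this rewrites the
   payoff increment divided by [e] as the claimed integral plus first-order
   Taylor remainders of [f(., abar)], [r(., abar)], [q] at [x^abar], plus [e]
   times the variation of [f(., a') - f(., abar)] and [r(., a') - r(., abar)]
   between [x^abar] and [x^e]. Uniform continuity of the data on a tube
   around [x^abar] makes all of these [o(e)]. *)

HB.instance Definition _ := Monoid.isComLaw.Build R 0 Rplus
  (fun x y z => esym (Rplus_assoc x y z)) Rplus_comm Rplus_0_l.
HB.instance Definition _ := Monoid.isComLaw.Build R 1 Rmult
  (fun x y z => esym (Rmult_assoc x y z)) Rmult_comm Rmult_1_l.
HB.instance Definition _ := Monoid.isMulLaw.Build R 0 Rmult Rmult_0_l Rmult_0_r.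
HB.instance Definition _ :=
  Monoid.isAddLaw.Build R Rmult Rplus Rmult_plus_distr_r Rmult_plus_distr_l.

(** * Finite sums and norms on [vec n] *)

Lemma sum_ge0 n (F : 'I_n -> R) : (forall k, 0 <= F k) -> 0 <= \big[Rplus/0]_(k < n) F k.
Proof. by move=> H; apply: big_ind => //; [lra | move=> *; lra]. Qed.

Lemma sum_le n (F G : 'I_n -> R) : (forall k, F k <= G k) ->
  \big[Rplus/0]_(k < n) F k <= \big[Rplus/0]_(k < n) G k.
Proof. by move=> H; apply: big_ind2 => //; [lra | move=> *; lra]. Qed.

Lemma Rabs_sum_le n (F : 'I_n -> R) :
  Rabs (\big[Rplus/0]_(k < n) F k) <= \big[Rplus/0]_(k < n) Rabs (F k).
Proof.
apply: (big_ind2 (fun x y => Rabs x <= y)).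
- by rewrite Rabs_R0; lra.
- by move=> x1 x2 y1 y2 H1 H2; apply: Rle_trans (Rabs_triang _ _) _; lra.
- by move=> *; lra.
Qed.

Lemma sum_const n c : \big[Rplus/0]_(k < n) c = INR n * c.
Proof.
elim: n => [|n IH]; first by rewrite big_ord0 /=; ring.
by rewrite S_INR big_ord_recr /= IH; ring.
Qed.

Lemma sum_le_const n (F : 'I_n -> R) c : (forall k, F k <= c) ->
  \big[Rplus/0]_(k < n) F k <= INR n * c.
Proof. by move=> H; rewrite -sum_const; exact: sum_le. Qed.

Lemma term_le_sum n (F : 'I_n -> R) k : (forall k, 0 <= F k) ->
  F k <= \big[Rplus/0]_(j < n) F j.
Proof.
move=> H; rewrite (bigD1 k) //=.
set S := \big[_/_]_(_ | _) _.
have : 0 <= S by apply: big_ind => [|x y hx hy|j _]; [lra | lra | exact: H].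
lra.
Qed.

Lemma sum_minus n (F G : 'I_n -> R) :
  \big[Rplus/0]_(k < n) (F k - G k) =
  \big[Rplus/0]_(k < n) F k - \big[Rplus/0]_(k < n) G k.
Proof.
by rewrite /Rminus (big_morph Ropp Ropp_plus_distr Ropp_0) -big_split.
Qed.

Definition l1norm n (u : vec n) : R := \big[Rplus/0]_(k < n) Rabs (u k).

Lemma l1norm_ge0 n (u : vec n) : 0 <= l1norm u.
Proof. by apply: sum_ge0 => k; exact: Rabs_pos. Qed.

Lemma dot_ge0 n (u : vec n) : 0 <= dot u u.
Proof. by apply: sum_ge0 => k; nra. Qed.

Lemma dotC n (u v : vec n) : dot u v = dot v u.
Proof. by rewrite /dot; apply: eq_bigr => k _; ring. Qed.

Lemma dot_vsubl n (u v w : vec n) : dot (vsub u v) w = dot u w - dot v w.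
Proof. by rewrite /dot -sum_minus; apply: eq_bigr => k _; rewrite /vsub; ring. Qed.

Lemma dot_vscaler n (u h : vec n) c : dot u (vscale c h) = c * dot u h.
Proof. by rewrite /dot big_distrr /=; apply: eq_bigr => k _; rewrite /vscale; ring. Qed.

Lemma vnorm_ge0 n (u : vec n) : 0 <= vnorm u.
Proof. exact: sqrt_pos. Qed.

Lemma vnorm_sq n (u : vec n) : vnorm u * vnorm u = dot u u.
Proof. by rewrite /vnorm sqrt_sqrt //; exact: dot_ge0. Qed.

Lemma Rabs_le_vnorm n (u : vec n) k : Rabs (u k) <= vnorm u.
Proof.
rewrite /vnorm -sqrt_Rsqr_abs; apply: sqrt_le_1_alt.
rewrite /Rsqr /dot; by apply: (@term_le_sum _ (fun j => u j * u j)) => j; nra.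
Qed.

Lemma vnorm_le_l1norm n (u : vec n) : vnorm u <= l1norm u.
Proof.
rewrite /vnorm -(sqrt_Rsqr (l1norm u)); last exact: l1norm_ge0.
apply: sqrt_le_1_alt; rewrite /Rsqr {1}/l1norm big_distrl /=.
apply: sum_le => k.
have hk : Rabs (u k) <= l1norm u by apply: (@term_le_sum _ (fun j => Rabs (u j))) => j; exact: Rabs_pos.
have -> : u k * u k = Rabs (u k) * Rabs (u k) by rewrite -Rabs_mult Rabs_right //; nra.
by apply: Rmult_le_compat_l hk; exact: Rabs_pos.
Qed.

Lemma l1norm_le_vnorm n (u : vec n) : l1norm u <= INR n * vnorm u.
Proof. by apply: sum_le_const => k; exact: Rabs_le_vnorm. Qed.

Lemma vnorm_le_comp n (u : vec n) c : (forall k, Rabs (u k) <= c) -> vnorm u <= INR n * c.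
Proof. by move=> H; apply: Rle_trans (vnorm_le_l1norm u) _; exact: sum_le_const. Qed.

Lemma Rabs_dot_le n (u v : vec n) B : (forall k, Rabs (u k) <= B) ->
  Rabs (dot u v) <= B * l1norm v.
Proof.
move=> H; apply: Rle_trans (Rabs_sum_le _) _; rewrite /l1norm big_distrr.
by apply: sum_le => k; rewrite Rabs_mult; apply: Rmult_le_compat_r; [exact: Rabs_pos | exact: H].
Qed.

Lemma vnorm_scale n c (u : vec n) : vnorm (vscale c u) = Rabs c * vnorm u.
Proof.
rewrite /vnorm /vscale.
have -> : dot (fun k => c * u k) (fun k => c * u k) = (c * c) * dot u u.
  by rewrite /dot big_distrr /=; apply: eq_bigr => k _; ring.
by rewrite sqrt_mult; [rewrite -sqrt_Rsqr_abs | nra | exact: dot_ge0].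
Qed.

Lemma vadd_vsub n (x y : vec n) : vadd x (vsub y x) = y.
Proof. by apply: functional_extensionality => k; rewrite /vadd /vsub; ring. Qed.

Lemma vnorm_vsub_le n (y z w : vec n) :
  vnorm (vsub y z) <= INR n * (vnorm (vsub y w) + vnorm (vsub w z)).
Proof.
apply: vnorm_le_comp => k.
have h1 := Rabs_le_vnorm (vsub y w) k; have h2 := Rabs_le_vnorm (vsub w z) k.
rewrite /vsub in h1 h2 *.
have -> : y k - z k = (y k - w k) + (w k - z k) by ring.
by apply: Rle_trans (Rabs_triang _ _) _; lra.
Qed.

Lemma sum_transpose n (A : 'I_n -> 'I_n -> R) (l d : 'I_n -> R) :
  \big[Rplus/0]_(k < n) ((\big[Rplus/0]_(j < n) (A j k * l j)) * d k) =
  \big[Rplus/0]_(k < n) (l k * \big[Rplus/0]_(j < n) (A k j * d j)).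
Proof.
rewrite (eq_bigr (fun k => \big[Rplus/0]_(j < n) (A j k * l j * d k))); last first.
  by move=> k _; rewrite big_distrl.
rewrite exchange_big /=; apply: eq_bigr => k _; rewrite big_distrr /=.
by apply: eq_bigr => j _; ring.
Qed.

Lemma continuity_pt_of_eps (f : R -> R) x :
  (forall eps, 0 < eps -> exists alp, 0 < alp /\
     forall y, Rabs (y - x) < alp -> Rabs (f y - f x) < eps) ->
  continuity_pt f x.
Proof.
move=> H eps He; have [alp [Ha Hy]] := H eps He.
by exists alp; split => // y [_ Hy']; exact: Hy.
Qed.

Lemma continuity_pt_eps (f : R -> R) x : continuity_pt f x ->
  forall eps, 0 < eps -> exists alp, 0 < alp /\
    forall y, Rabs (y - x) < alp -> Rabs (f y - f x) < eps.
Proof.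
move=> H eps He; have [alp [Ha Hy]] := H eps He; exists alp; split => // y Hyx.
case: (Req_dec y x) => [->|Hne]; first by rewrite Rminus_eq_0 Rabs_R0.
by apply: (Hy y); split => //; split => //; apply: not_eq_sym.
Qed.

Lemma continuity_pt_cst (a x : R) : continuity_pt (fun _ => a) x.
Proof. by apply: continuity_pt_const => u v. Qed.

Lemma continuity_pt_sum n (F : 'I_n -> R -> R) t : (forall k, continuity_pt (F k) t) ->
  continuity_pt (fun s => \big[Rplus/0]_(k < n) F k s) t.
Proof.
elim: n F => [|n IH] F H.
  have -> : (fun s => \big[Rplus/0]_(k < 0) F k s) = fun _ => 0.
    by apply: functional_extensionality => s; rewrite big_ord0.
  exact: continuity_pt_cst.
have -> : (fun s => \big[Rplus/0]_(k < n.+1) F k s) =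
   (fun s => \big[Rplus/0]_(k < n) F (widen_ord (leqnSn n) k) s + F ord_max s).
  by apply: functional_extensionality => s; rewrite big_ord_recr.
by apply: continuity_pt_plus; [apply: IH | exact: H].
Qed.

Lemma derivable_pt_lim_sum n (F : 'I_n -> R -> R) (D : 'I_n -> R) t :
  (forall k, derivable_pt_lim (F k) t (D k)) ->
  derivable_pt_lim (fun s => \big[Rplus/0]_(k < n) F k s) t (\big[Rplus/0]_(k < n) D k).
Proof.
elim: n F D => [|n IH] F D H.
  have -> : (fun s => \big[Rplus/0]_(k < 0) F k s) = fct_cte 0.
    by apply: functional_extensionality => s; rewrite big_ord0.
  by rewrite big_ord0; exact: derivable_pt_lim_const.
have -> : (fun s => \big[Rplus/0]_(k < n.+1) F k s) =
   (fun s => \big[Rplus/0]_(k < n) F (widen_ord (leqnSn n) k) s + F ord_max s).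
  by apply: functional_extensionality => s; rewrite big_ord_recr.
by rewrite big_ord_recr /=; apply: derivable_pt_lim_plus; [apply: IH | exact: H].
Qed.

Lemma continuity_pt_dot n (u v : R -> vec n) x :
  (forall k, continuity_pt (fun s => u s k) x) ->
  (forall k, continuity_pt (fun s => v s k) x) ->
  continuity_pt (fun s => dot (u s) (v s)) x.
Proof. by move=> H1 H2; apply: continuity_pt_sum => k; apply: continuity_pt_mult. Qed.

Lemma exists_common_delta n (P : 'I_n -> R -> Prop) :
  (forall k a a', 0 < a' <= a -> P k a -> P k a') ->
  (forall k, exists a, 0 < a /\ P k a) -> exists a, 0 < a /\ forall k, P k a.
Proof.
move=> Hmono H.
have /all_sig[d Hd] : forall k, {a | 0 < a /\ P k a}.
  by move=> k; apply: constructive_indefinite_description; exact: H.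
have min_pos (s : seq 'I_n) : 0 < \big[Rmin/1]_(j <- s) d j.
  by apply: big_ind => [|x y|j _]; [lra | exact: Rmin_pos | exact: (proj1 (Hd j))].
exists (\big[Rmin/1]_(k < n) d k); split => // k.
apply: (Hmono k (d k)); last exact: (proj2 (Hd k)).
split => //.
have min_le (s : seq 'I_n) : k \in s -> \big[Rmin/1]_(j <- s) d j <= d k.
  elim: s => [|a s IH] //; rewrite in_cons big_cons => /orP [/eqP <-|/IH h].
    exact: Rmin_l.
  exact: Rle_trans (Rmin_r _ _) h.
exact/min_le/mem_index_enum.
Qed.

Lemma vec_continuity_pt n (g : R -> vec n) t :
  (forall k, continuity_pt (fun s => g s k) t) ->
  forall eps, 0 < eps -> exists eta, 0 < eta /\
    forall s, Rabs (s - t) < eta -> vnorm (vsub (g s) (g t)) < eps.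
Proof.
move=> H eps He.
have hn := pos_INR n.
have he' : 0 < eps / (INR n + 1) by apply: Rdiv_lt_0_compat; lra.
have [a [Ha Hk]] := exists_common_delta
  (P := fun k a => forall s, Rabs (s - t) < a -> Rabs (g s k - g t k) < eps / (INR n + 1))
  ltac:(move=> k a a' ha hP s hs; apply: hP; lra)
  ltac:(move=> k; exact: continuity_pt_eps).
exists a; split => // s hs.
apply: Rle_lt_trans (vnorm_le_comp (c := eps / (INR n + 1)) _) _.
  by move=> k; left; exact: Hk.
have -> : INR n * (eps / (INR n + 1)) = eps * (INR n / (INR n + 1)) by field; lra.
have : INR n / (INR n + 1) < 1.
  by apply: (Rmult_lt_reg_r (INR n + 1)); [lra | field_simplify; lra].
nra.
Qed.

Lemma continuity_pt_vcont_comp n (G : vec n -> R) (g : R -> vec n) t : vcont G (g t) ->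
  (forall k, continuity_pt (fun s => g s k) t) -> continuity_pt (fun s => G (g s)) t.
Proof.
move=> HG Hg; apply: continuity_pt_of_eps => eps He.
have [d [Hd HGd]] := HG eps He.
have [eta [He' Hs]] := vec_continuity_pt Hg Hd.
by exists eta; split => // s hs; exact: HGd (Hs _ hs).
Qed.

Lemma vcont_minus n (g h : vec n -> R) x : vcont g x -> vcont h x ->
  vcont (fun y => g y - h y) x.
Proof.
move=> H1 H2 eps He.
have [d1 [Hd1 H1']] := H1 (eps / 2) ltac:(lra).
have [d2 [Hd2 H2']] := H2 (eps / 2) ltac:(lra).
exists (Rmin d1 d2); split; first exact: Rmin_pos.
move=> y hy.
have := H1' y (Rlt_le_trans _ _ _ hy (Rmin_l _ _)).
have := H2' y (Rlt_le_trans _ _ _ hy (Rmin_r _ _)).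
have -> : g y - h y - (g x - h x) = (g y - g x) - (h y - h x) by ring.
by move=> *; apply: Rle_lt_trans (Rabs_triang _ _) _; rewrite Rabs_Ropp; lra.
Qed.

Lemma fdiff_vcont n (g : vec n -> R) x D : fdiff g x D -> vcont g x.
Proof.
move=> H eps He.
have hN := l1norm_ge0 D.
have [d1 [Hd1 Hg]] := H 1 Rlt_0_1.
have hp : 0 < eps / (2 * (1 + l1norm D)) by apply: Rdiv_lt_0_compat; lra.
exists (Rmin d1 (eps / (2 * (1 + l1norm D)))); split; first exact: Rmin_pos.
move=> y hy; set v := vnorm (vsub y x).
have hy1 : v < d1 by apply: Rlt_le_trans hy (Rmin_l _ _).
have hy2 : v < eps / (2 * (1 + l1norm D)) by apply: Rlt_le_trans hy (Rmin_r _ _).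
have := Hg _ hy1; rewrite vadd_vsub -/v => h1.
have h2 : Rabs (dot D (vsub y x)) <= v * l1norm D.
  by rewrite dotC; apply: Rabs_dot_le => k; exact: Rabs_le_vnorm.
have hv : 0 <= v := vnorm_ge0 _.
have : Rabs (g y - g x) <= v * (1 + l1norm D).
  have -> : g y - g x = (g y - g x - dot D (vsub y x)) + dot D (vsub y x) by ring.
  by apply: Rle_trans (Rabs_triang _ _) _; lra.
have : v * (1 + l1norm D) < eps / 2.
  have -> : eps / 2 = eps / (2 * (1 + l1norm D)) * (1 + l1norm D) by field; lra.
  by apply: Rmult_lt_compat_r; lra.
lra.
Qed.

(* Uniformity comes from the compactness of [0, T] ([compactness_value_1d]). *)
Lemma vcont_unif_along n (G : vec n -> R) (g : R -> vec n) T :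
  (forall y, vcont G y) -> (forall t k, continuity_pt (fun s => g s k) t) ->
  forall eps, 0 < eps -> exists rho, 0 < rho /\ forall s y, 0 <= s <= T ->
    vnorm (vsub y (g s)) < rho -> Rabs (G y - G (g s)) < eps.
Proof.
move=> HG Hg eps He.
have hn := pos_INR n.
have /all_sig[rho Hrho] : forall t, {r | 0 < r /\
    forall y, vnorm (vsub y (g t)) < r -> Rabs (G y - G (g t)) < eps / 2}.
  by move=> t; apply: constructive_indefinite_description; apply: HG; lra.
pose rho' t := rho t / (2 * (INR n + 1)).
have rho'_pos t : 0 < rho' t by apply: Rdiv_lt_0_compat; [exact: (proj1 (Hrho t)) | lra].
have /all_sig[eta Heta] : forall t, {e | 0 < e /\
    forall s, Rabs (s - t) < e -> vnorm (vsub (g s) (g t)) < rho' t}.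
  by move=> t; apply: constructive_indefinite_description; exact: vec_continuity_pt.
have dpos t : 0 < Rmin (eta t) (rho' t) by apply: Rmin_pos; [exact: (proj1 (Heta t)) |].
have [d Hd] := compactness_value_1d 0 T (fun t => mkposreal _ (dpos t)).
exists d; split; first exact: cond_pos.
move=> s y hs hy; apply: Rnot_le_lt => Hcon.
apply: (Hd s hs) => -[t [ht [/= hst hdt]]].
have hs_t : vnorm (vsub (g s) (g t)) < rho' t.
  by apply: (proj2 (Heta t)); apply: Rlt_le_trans hst (Rmin_l _ _).
have hd : d <= rho' t by apply: Rle_trans hdt (Rmin_r _ _).
have hrho := proj1 (Hrho t).
have hrho' : rho' t <= rho t / 2.
  by apply: Rmult_le_compat_l; [lra | apply: Rinv_le_contravar; lra].
have A1 : Rabs (G (g s) - G (g t)) < eps / 2 by apply: (proj2 (Hrho t)); lra.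
have A2 : Rabs (G y - G (g t)) < eps / 2.
  apply: (proj2 (Hrho t)); apply: Rle_lt_trans (vnorm_vsub_le y (g t) (g s)) _.
  have -> : rho t = INR n * (2 * rho' t) + rho t / (INR n + 1) by rewrite /rho'; field; lra.
  have : 0 < rho t / (INR n + 1) by apply: Rdiv_lt_0_compat; lra.
  have := vnorm_ge0 (vsub y (g s)); have := vnorm_ge0 (vsub (g s) (g t)).
  move=> *; nra.
have : Rabs (G y - G (g s)) <= Rabs (G y - G (g t)) + Rabs (G (g s) - G (g t)).
  have -> : G y - G (g s) = (G y - G (g t)) - (G (g s) - G (g t)) by ring.
  by apply: Rle_trans (Rabs_triang _ _) _; rewrite Rabs_Ropp; lra.
lra.
Qed.

Lemma fdiff_derivable_pt_lim_line n (g : vec n -> R) (Dg : vec n -> vec n) x h t0 :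
  (forall p, fdiff g p (Dg p)) ->
  derivable_pt_lim (fun t => g (vadd x (vscale t h))) t0
    (dot (Dg (vadd x (vscale t0 h))) h).
Proof.
move=> H eps He.
set p := vadd x (vscale t0 h).
have hv := vnorm_ge0 h.
have he' : 0 < eps / (2 * (vnorm h + 1)) by apply: Rdiv_lt_0_compat; lra.
have [d [Hd Hg]] := H p _ he'.
have hdp : 0 < d / (vnorm h + 1) by apply: Rdiv_lt_0_compat; lra.
exists (mkposreal _ hdp) => s hs0 /= hs.
have -> : vadd x (vscale (t0 + s) h) = vadd p (vscale s h).
  by apply: functional_extensionality => k; rewrite /p /vadd /vscale; ring.
have hn : vnorm (vscale s h) < d.
  rewrite vnorm_scale.
  have : Rabs s * vnorm h <= Rabs s * (vnorm h + 1).
    by apply: Rmult_le_compat_l; [exact: Rabs_pos | lra].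
  have : Rabs s * (vnorm h + 1) < d.
    have -> : d = d / (vnorm h + 1) * (vnorm h + 1) by field; lra.
    by apply: Rmult_lt_compat_r; lra.
  lra.
have := Hg _ hn; rewrite dot_vscaler vnorm_scale => h1.
have hsa : 0 < Rabs s by exact: Rabs_pos_lt.
have -> : (g (vadd p (vscale s h)) - g p) / s - dot (Dg p) h =
          (g (vadd p (vscale s h)) - g p - s * dot (Dg p) h) / s by field.
rewrite /Rdiv Rabs_mult Rabs_inv.
apply: (Rmult_lt_reg_r (Rabs s)) => //.
rewrite Rmult_assoc Rinv_l; last lra.
rewrite Rmult_1_r; apply: Rle_lt_trans h1 _.
have : eps / (2 * (vnorm h + 1)) * vnorm h < eps.
  have : vnorm h / (vnorm h + 1) < 1.
    by apply: (Rmult_lt_reg_r (vnorm h + 1)); [lra | field_simplify; lra].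
  have -> : eps / (2 * (vnorm h + 1)) * vnorm h = eps / 2 * (vnorm h / (vnorm h + 1)).
    by field; lra.
  have : 0 <= vnorm h / (vnorm h + 1) by apply: Rle_mult_inv_pos; lra.
  nra.
nra.
Qed.

(* Mean value theorem on the segment [[c s, y]], and [vcont_unif_along] for [Dg]. *)
Lemma fdiff_unif_along n (g : vec n -> R) (Dg : vec n -> vec n) (c : R -> vec n) T :
  (forall p, fdiff g p (Dg p)) -> (forall p k, vcont (fun y => Dg y k) p) ->
  (forall t k, continuity_pt (fun s => c s k) t) ->
  forall eps, 0 < eps -> exists rho, 0 < rho /\ forall s y, 0 <= s <= T ->
    vnorm (vsub y (c s)) < rho ->
    Rabs (g y - g (c s) - dot (Dg (c s)) (vsub y (c s))) <= eps * vnorm (vsub y (c s)).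
Proof.
move=> Hf Hc Hcur eps He.
have hn := pos_INR n.
have he' : 0 < eps / (INR n + 1) by apply: Rdiv_lt_0_compat; lra.
have [rho [Hr HP]] := exists_common_delta (P := fun k r => forall s y, 0 <= s <= T ->
    vnorm (vsub y (c s)) < r -> Rabs (Dg y k - Dg (c s) k) < eps / (INR n + 1))
  ltac:(move=> k a a' ha hP s y hs hy; apply: hP => //; lra)
  ltac:(move=> k; apply: (vcont_unif_along (G := fun y => Dg y k)) => //; exact: Hc).
exists rho; split => // s y hs hy.
set x := c s; set h := vsub y x.
have [th [Heq Hth]] := MVT_cor2 (fun t => g (vadd x (vscale t h)))
   (fun t => dot (Dg (vadd x (vscale t h))) h) 0 1 Rlt_0_1
   ltac:(move=> t _; exact: fdiff_derivable_pt_lim_line).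
move: Heq; have -> : vadd x (vscale 1 h) = y.
  by apply: functional_extensionality => k; rewrite /vadd /vscale /h /vsub; ring.
have -> : vadd x (vscale 0 h) = x.
  by apply: functional_extensionality => k; rewrite /vadd /vscale; ring.
move=> Heq.
have -> : g y - g x - dot (Dg x) h = dot (vsub (Dg (vadd x (vscale th h))) (Dg x)) h.
  by rewrite dot_vsubl; lra.
apply: Rle_trans (Rabs_dot_le (B := eps / (INR n + 1)) h _) _.
  move=> k; rewrite /vsub; left; apply: HP => //.
  have -> : vsub (vadd x (vscale th h)) x = vscale th h.
    by apply: functional_extensionality => j; rewrite /vadd /vsub /vscale; ring.
  rewrite vnorm_scale Rabs_right; last lra.
  by have := vnorm_ge0 h; rewrite /h /x; nra.
have h1 := l1norm_le_vnorm h; have h2 := vnorm_ge0 h.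
have : eps / (INR n + 1) * l1norm h <= eps / (INR n + 1) * (INR n * vnorm h).
  by apply: Rmult_le_compat_l; lra.
have -> : eps / (INR n + 1) * (INR n * vnorm h) = eps * vnorm h * (INR n / (INR n + 1)).
  by field; lra.
have : INR n / (INR n + 1) <= 1.
  by apply: (Rmult_le_reg_r (INR n + 1)); [lra | field_simplify; lra].
have : 0 <= eps * vnorm h by nra.
nra.
Qed.

Lemma continuity_pt_ub (g : R -> R) T : 0 <= T -> (forall x, continuity_pt g x) ->
  exists M, forall t, 0 <= t <= T -> g t <= M.
Proof.
move=> HT Hc; have [Mx [H _]] := continuity_ab_maj g 0 T HT (fun c _ => Hc c).
by exists (g Mx).
Qed.

Lemma continuity_pt_ub_family n (G : 'I_n -> R -> R) T : 0 <= T ->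
  (forall k x, continuity_pt (G k) x) ->
  exists M, 0 <= M /\ forall k t, 0 <= t <= T -> Rabs (G k t) <= M.
Proof.
move=> HT Hc.
have [M HM] := continuity_pt_ub (g := fun t => \big[Rplus/0]_(k < n) Rabs (G k t)) HT
  (fun x => continuity_pt_sum (fun k => continuity_pt_comp _ _ x (Hc k x) (Rcontinuity_abs _))).
exists (Rmax 0 M); split; first exact: Rmax_l.
move=> k t ht; apply: Rle_trans (Rmax_r 0 M); apply: Rle_trans (HM t ht).
by apply: (@term_le_sum _ (fun k => Rabs (G k t))) => j; exact: Rabs_pos.
Qed.

(** * One-variable calculus on [0, T] *)

Lemma mvt_open (f f' : R -> R) a b : a < b ->
  (forall c, a <= c <= b -> continuity_pt f c) ->
  (forall c, a < c < b -> derivable_pt_lim f c (f' c)) ->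
  exists c, a < c < b /\ f b - f a = f' c * (b - a).
Proof.
move=> hab Hc Hd.
have pr1 c : a < c < b -> derivable_pt f c by move=> hc; exists (f' c); exact: Hd.
have pr2 c : a < c < b -> derivable_pt Ranalysis1.id c by move=> _; exact: derivable_pt_id.
have [c [P Heq]] := MVT f Ranalysis1.id a b pr1 pr2 hab Hc
  (fun c _ => derivable_continuous_pt _ _ (derivable_pt_id c)).
exists c; split => //.
rewrite (derive_pt_eq_0 f c (f' c) (pr1 c P) (Hd c P)) in Heq.
rewrite (derive_pt_eq_0 Ranalysis1.id c 1 (pr2 c P) (derivable_pt_lim_id c)) in Heq.
by rewrite /Ranalysis1.id in Heq; lra.
Qed.

Lemma integ_RInt g a b : ex_RInt g a b -> integ g a b = RInt g a b.
Proof.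
move=> H; rewrite /integ.
have ex : exists I, exists pr : Riemann_integrable g a b, RiemannInt pr = I.
  by exists (RiemannInt (ex_RInt_Reals_0 _ _ _ H)); exists (ex_RInt_Reals_0 _ _ _ H).
have [pr <-] := epsilon_spec (inhabits 0) _ ex.
by rewrite (RInt_Reals _ _ _ pr).
Qed.

Lemma ex_RInt_continuity_pt (h : R -> R) a b : (forall x, continuity_pt h x) -> ex_RInt h a b.
Proof.
by move=> H; apply: ex_RInt_continuous => z _; apply/continuity_pt_filterlim; exact: H.
Qed.

Lemma RInt_agree (h hc : R -> R) a b : a <= b -> (forall x, continuity_pt hc x) ->
  (forall t, a <= t <= b -> h t = hc t) -> ex_RInt h a b /\ RInt h a b = RInt hc a b.
Proof.
move=> hab Hc Heq; split.
  apply: (ex_RInt_ext hc); last exact: ex_RInt_continuity_pt.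
  by move=> x; rewrite Rmin_left // Rmax_right // => hx; symmetry; apply: Heq; lra.
by apply: RInt_ext => x; rewrite Rmin_left // Rmax_right // => hx; apply: Heq; lra.
Qed.

Lemma RInt_derivable_pt_lim (h D : R -> R) T : 0 < T ->
  (forall x, continuity_pt h x) -> (forall x, continuity_pt D x) ->
  (forall t, 0 < t < T -> derivable_pt_lim h t (D t)) -> h T - h 0 = RInt D 0 T.
Proof.
move=> HT Hh HD Hd.
have Hder t : derivable_pt_lim (fun s => RInt D 0 s) t (D t).
  apply/is_derive_Reals; apply: is_derive_RInt.
    by apply: filter_forall => b; apply: RInt_correct; exact: ex_RInt_continuity_pt.
  by apply/continuity_pt_filterlim; exact: HD.
pose G s := h s - RInt D 0 s.
have HG c : 0 <= c <= T -> continuity_pt G c.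
  move=> _; apply: continuity_pt_minus => //.
  by apply: derivable_continuous_pt; exists (D c); exact: Hder.
have HdG c : 0 < c < T -> derivable_pt_lim G c ((fun _ => 0) c).
  move=> hc; have := derivable_pt_lim_minus _ _ c _ _ (Hd c hc) (Hder c).
  by rewrite Rminus_eq_0.
have [c [hc Heq]] := mvt_open HT HG HdG.
by move: Heq; rewrite /G RInt_point /zero /=; lra.
Qed.

(* Take the last time [tau <= t1] with [phi tau <= A]: just after [tau],
   [phi < B], hence [phi' <= 0], so [phi] cannot have grown. *)
Lemma barrier_le (phi dphi : R -> R) T A B : 0 < T ->
  (forall x, continuity_pt phi x) ->
  (forall t, 0 < t < T -> derivable_pt_lim phi t (dphi t)) ->
  (forall t, 0 < t < T -> phi t < B -> dphi t <= 0) ->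
  phi 0 <= A -> A < B -> forall t, 0 <= t <= T -> phi t <= A.
Proof.
move=> HT Hc Hd Hneg H0 HAB t1 ht1; apply: Rnot_lt_le => Hcon.
pose S s := 0 <= s <= t1 /\ phi s <= A.
have [tau [Hub Hlub]] : {m | is_lub S m}.
  by apply: completeness; [exists t1 => s [[_ h] _] | exists 0; split => //; lra].
have tau0 : 0 <= tau by apply: Hub; split => //; lra.
have taut1 : tau <= t1 by apply: Hlub => s [[_ h] _].
have Htau : phi tau <= A.
  apply: Rnot_lt_le => hlt.
  have [al [Hal Hs]] := continuity_pt_eps (Hc tau) (eps := phi tau - A) ltac:(lra).
  have : tau <= tau - al / 2.
    apply: Hlub => s [hs hsA].
    have hst : s <= tau by apply: Hub.
    apply: Rnot_lt_le => hlt2.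
    have : Rabs (s - tau) < al by rewrite Rabs_left1; lra.
    by move/Hs; split_Rabs; lra.
  lra.
have tault : tau < t1.
  by case: (Rle_lt_or_eq_dec _ _ taut1) => // heq; rewrite heq in Htau; lra.
have [al [Hal Hs]] := continuity_pt_eps (Hc tau) (eps := B - A) ltac:(lra).
pose t2 := Rmin (tau + al / 2) t1.
have t2gt : tau < t2 by apply: Rmin_glb_lt; lra.
have t2le : t2 <= t1 := Rmin_r _ _.
have t2le' : t2 <= tau + al / 2 := Rmin_l _ _.
have [c [hc Heq]] := mvt_open t2gt (fun c _ => Hc c) (f' := dphi)
  ltac:(move=> c hc; apply: Hd; lra).
have hdc : dphi c <= 0.
  apply: Hneg; first lra.
  have : Rabs (c - tau) < al by rewrite Rabs_right; lra.
  by move/Hs; split_Rabs; lra.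
have : t2 <= tau by apply: Hub; split => //; nra.
lra.
Qed.

Lemma derivable_pt_lim_exp_lin c x :
  derivable_pt_lim (fun s => exp (- c * s)) x (- c * exp (- c * x)).
Proof.
have Hlin : derivable_pt_lim (fun s => - c * s) x (- c).
  have := derivable_pt_lim_scal Ranalysis1.id (- c) x 1 (derivable_pt_lim_id x).
  by rewrite Rmult_1_r.
have := derivable_pt_lim_comp _ exp x _ _ Hlin (derivable_pt_lim_exp _).
by rewrite Rmult_comm.
Qed.

Lemma exp_le_exp x y : x <= y -> exp x <= exp y.
Proof. by case=> [h | ->]; [left; exact: exp_increasing | lra]. Qed.

Lemma RInt_plus_cont (f g : R -> R) a b :
  (forall x, continuity_pt f x) -> (forall x, continuity_pt g x) ->
  RInt (fun t => f t + g t) a b = RInt f a b + RInt g a b.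
Proof. by move=> Hf Hg; apply: RInt_plus; exact: ex_RInt_continuity_pt. Qed.

Lemma RInt_minus_cont (f g : R -> R) a b :
  (forall x, continuity_pt f x) -> (forall x, continuity_pt g x) ->
  RInt (fun t => f t - g t) a b = RInt f a b - RInt g a b.
Proof. by move=> Hf Hg; apply: RInt_minus; exact: ex_RInt_continuity_pt. Qed.

Lemma RInt_scal_cont (f : R -> R) c a b : (forall x, continuity_pt f x) ->
  RInt (fun t => c * f t) a b = c * RInt f a b.
Proof. by move=> Hf; apply: RInt_scal; exact: ex_RInt_continuity_pt. Qed.

(* The comparison function [(|d|^2 + e^2) exp (- c t)] is nonincreasing
   inside the tube for [c = 2 n L + n M + 1]; this gives [K = exp (c T / 2)]. *)
Lemma vnorm_le_of_tube_deriv n T rho L M : 0 < T -> 0 < rho -> 0 <= L -> 0 <= M ->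
  exists K e1, 0 < K /\ 0 < e1 /\ forall e (d dd : R -> vec n), 0 < e -> e < e1 ->
  (forall t k, continuity_pt (fun s => d s k) t) ->
  (forall t, 0 < t < T -> forall k, derivable_pt_lim (fun s => d s k) t (dd t k)) ->
  (forall t, 0 < t < T -> vnorm (d t) < rho -> forall k,
     Rabs (dd t k) <= L * vnorm (d t) + e * M) ->
  (forall k, d 0 k = 0) ->
  forall t, 0 <= t <= T -> vnorm (d t) <= K * e.
Proof.
move=> HT Hrho HL HM.
have hn := pos_INR n.
pose c := 2 * INR n * L + INR n * M + 1.
have hc : 0 < c by rewrite /c; nra.
exists (exp (c * T / 2)), (rho * exp (- (c * T / 2))).
split; first exact: exp_pos.
split; first by apply: Rmult_lt_0_compat => //; exact: exp_pos.
move=> e d dd he hee1 Hdc Hdd Htube Hd0.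
pose w t := dot (d t) (d t).
pose phi t := (w t + e * e) * exp (- c * t).
pose wd t := \big[Rplus/0]_(k < n) (dd t k * d t k + d t k * dd t k).
pose dphi t := (wd t - c * (w t + e * e)) * exp (- c * t).
have Hphic x : continuity_pt phi x.
  apply: continuity_pt_mult.
    by apply: continuity_pt_plus; [exact: continuity_pt_dot | exact: continuity_pt_cst].
  by apply: derivable_continuous_pt; eexists; exact: derivable_pt_lim_exp_lin.
have Hphid t : 0 < t < T -> derivable_pt_lim phi t (dphi t).
  move=> ht.
  have Hw : derivable_pt_lim w t (wd t).
    by apply: derivable_pt_lim_sum => k; apply: derivable_pt_lim_mult; exact: Hdd.
  have -> : dphi t = (wd t + 0) * exp (- c * t) + (w t + e * e) * (- c * exp (- c * t)).
    by rewrite /dphi; ring.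
  apply: derivable_pt_lim_mult (derivable_pt_lim_exp_lin c t).
  exact: derivable_pt_lim_plus Hw (derivable_pt_lim_const _ _).
have Hneg t : 0 < t < T -> phi t < rho * rho * exp (- c * T) -> dphi t <= 0.
  move=> ht hphi.
  have hw0 : 0 <= w t := dot_ge0 _.
  have hexp : exp (- c * T) <= exp (- c * t) by apply: exp_le_exp; nra.
  have hep := exp_pos (- c * t).
  have hwr : w t + e * e < rho * rho.
    apply: (Rmult_lt_reg_r (exp (- c * t))) => //.
    by rewrite /phi in hphi; nra.
  have hv0 := vnorm_ge0 (d t).
  have hvs : vnorm (d t) * vnorm (d t) = w t := vnorm_sq _.
  have hvr : vnorm (d t) < rho by nra.
  have hwd : wd t <= INR n * (2 * vnorm (d t) * (L * vnorm (d t) + e * M)).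
    apply: sum_le_const => k.
    have h1 := Htube t ht hvr k; have h2 := Rabs_le_vnorm (d t) k.
    have : dd t k * d t k <= Rabs (dd t k) * Rabs (d t k).
      by rewrite -Rabs_mult; exact: Rle_abs.
    have := Rabs_pos (dd t k); have := Rabs_pos (d t k).
    nra.
  suff : wd t <= c * (w t + e * e) by rewrite /dphi; nra.
  apply: Rle_trans hwd _; rewrite -hvs /c.
  have : 0 <= INR n * M * ((vnorm (d t) - e) * (vnorm (d t) - e)).
    by apply: Rmult_le_pos; [nra | exact: Rle_0_sqr].
  have : 0 <= INR n * L * (e * e) by apply: Rmult_le_pos; nra.
  nra.
have Hphi0 : phi 0 <= e * e.
  rewrite /phi; have -> : w 0 = 0.
    rewrite /w /dot (eq_bigr (fun _ => 0)) ?sum_const; first ring.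
    by move=> k _; rewrite Hd0; ring.
  by rewrite Rmult_0_r exp_0; lra.
have HAB : e * e < rho * rho * exp (- c * T).
  have -> : exp (- c * T) = exp (- (c * T / 2)) * exp (- (c * T / 2)).
    by rewrite -exp_plus; congr exp; lra.
  have := exp_pos (- (c * T / 2)); nra.
move=> t ht.
have Hbar := barrier_le HT Hphic Hphid Hneg Hphi0 HAB ht.
have hw : w t + e * e <= e * e * exp (c * t).
  have hinv : exp (- c * t) * exp (c * t) = 1.
    by rewrite -exp_plus -exp_0; congr exp; lra.
  have := Rmult_le_compat_r (exp (c * t)) _ _ (Rlt_le _ _ (exp_pos (c * t))) Hbar.
  by rewrite /phi Rmult_assoc hinv Rmult_1_r.
have hKs : exp (c * t) <= exp (c * T / 2) * exp (c * T / 2).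
  by rewrite -exp_plus; apply: exp_le_exp; nra.
have hv0 := vnorm_ge0 (d t).
have hvs : vnorm (d t) * vnorm (d t) = w t := vnorm_sq _.
have hK0 := exp_pos (c * T / 2).
have hw0 : 0 <= w t := dot_ge0 _.
have : vnorm (d t) * vnorm (d t) <= (exp (c * T / 2) * e) * (exp (c * T / 2) * e).
  have : e * e * exp (c * t) <= e * e * (exp (c * T / 2) * exp (c * T / 2)).
    by apply: Rmult_le_compat_l => //; nra.
  nra.
move=> h2; apply: Rnot_lt_le => hlt.
have hKe : 0 <= exp (c * T / 2) * e by nra.
have := Rmult_le_0_lt_compat _ _ _ _ hKe hKe hlt hlt; lra.
Qed.

(* Coquelicot's integration and derivative lemmas want curves that are
   continuous on the whole line; extend them by constants outside [0, T]. *)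
Definition clamp a b t := Rmax a (Rmin b t).

Lemma clamp_in a b t : a <= b -> a <= clamp a b t <= b.
Proof. by rewrite /clamp /Rmax /Rmin; repeat case: Rle_dec; lra. Qed.

Lemma clamp_id a b t : a <= t <= b -> clamp a b t = t.
Proof. by rewrite /clamp /Rmax /Rmin; repeat case: Rle_dec; lra. Qed.

Lemma Rabs_clamp_le a b x y : a <= b -> Rabs (clamp a b y - clamp a b x) <= Rabs (y - x).
Proof. by move=> hab; rewrite /clamp /Rmax /Rmin; repeat case: Rle_dec; split_Rabs; lra. Qed.

Lemma continuity_pt_clamp a b g : a <= b -> cont_on a b g ->
  forall x, continuity_pt (fun t => g (clamp a b t)) x.
Proof.
move=> hab H x; apply: continuity_pt_of_eps => eps He.
have [alp [Ha Hy]] := H _ (clamp_in x hab) eps He.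
exists alp; split => // y Hyx.
apply: (Hy (clamp a b y) (conj (clamp_in y hab) _)) => /=.
exact: Rle_lt_trans (Rabs_clamp_le _ _ hab) Hyx.
Qed.

Lemma derivable_pt_lim_local g h t l eta : 0 < eta ->
  (forall s, Rabs (s - t) < eta -> g s = h s) ->
  derivable_pt_lim g t l -> derivable_pt_lim h t l.
Proof.
move=> He Heq H eps Heps.
have [d Hd] := H eps Heps.
have hp : 0 < Rmin d eta by apply: Rmin_pos; [exact: cond_pos | exact: He].
exists (mkposreal _ hp) => s hs0 /= hs.
rewrite -!Heq; first (apply: Hd => //; exact: Rlt_le_trans hs (Rmin_l _ _)).
  by rewrite Rminus_eq_0 Rabs_R0; lra.
have -> : t + s - t = s by ring.
exact: Rlt_le_trans hs (Rmin_r _ _).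
Qed.

Lemma clamp_curve n T (z : R -> vec n) (L : R -> 'I_n -> R) : 0 < T ->
  (forall k, cont_on 0 T (fun t => z t k)) ->
  (forall t, 0 < t < T -> forall k, derivable_pt_lim (fun s => z s k) t (L t k)) ->
  (forall t k, continuity_pt (fun s => z (clamp 0 T s) k) t) /\
  (forall t, 0 < t < T -> forall k,
     derivable_pt_lim (fun s => z (clamp 0 T s) k) t (L t k)).
Proof.
move=> HT Hc Hd; split.
  by move=> t k; apply: (continuity_pt_clamp (g := fun t => z t k)); [lra | exact: Hc].
move=> t ht k; apply: (derivable_pt_lim_local (eta := Rmin t (T - t))); last exact: Hd.
  by apply: Rmin_pos; lra.
move=> s hs; rewrite clamp_id //.
have h1 := Rmin_l t (T - t); have h2 := Rmin_r t (T - t).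
by split_Rabs; lra.
Qed.

(** * Relaxed trajectories and the adjoint *)

Section Relaxation.

Variables (n : nat) (T : R) (F0 F1 : vec n -> vec n) (DF0 : vec n -> 'I_n -> vec n)
  (r0 r1 : vec n -> R) (Dr0 : vec n -> vec n) (q : vec n -> R) (Dq : vec n -> vec n)
  (xb lam : R -> vec n).

Hypothesis HT : 0 < T.
Hypothesis HF0 : forall y k, fdiff (fun y => F0 y k) y (DF0 y k).
Hypothesis HDF0 : forall y k j, vcont (fun y => DF0 y k j) y.
Hypothesis HF1 : forall y k, vcont (fun y => F1 y k) y.
Hypothesis Hr0 : forall y, fdiff r0 y (Dr0 y).
Hypothesis HDr0 : forall y k, vcont (fun y => Dr0 y k) y.
Hypothesis Hr1 : forall y, vcont r1 y.
Hypothesis Hq : fdiff q (xb T) (Dq (xb T)).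
Hypothesis Hxbc : forall t k, continuity_pt (fun s => xb s k) t.
Hypothesis Hxbd : forall t, 0 < t < T -> forall k,
  derivable_pt_lim (fun s => xb s k) t (F0 (xb t) k).
Hypothesis Hlamc : forall t k, continuity_pt (fun s => lam s k) t.
Hypothesis Hlamd : forall t, 0 < t < T -> forall k,
  derivable_pt_lim (fun s => lam s k) t
    (- (\big[Rplus/0]_(j < n) (DF0 (xb t) j k * lam t j) + Dr0 (xb t) k)).
Hypothesis HlamT : forall k, lam T k = Dq (xb T) k.

Let HF0c y k : vcont (fun y => F0 y k) y := fdiff_vcont (HF0 y k).
Let Hr0c y : vcont r0 y := fdiff_vcont (Hr0 y).

Definition relaxed_sol e (z : R -> vec n) :=
  [/\ forall t k, continuity_pt (fun s => z s k) t,
      forall t, 0 < t < T -> forall k,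
        derivable_pt_lim (fun s => z s k) t ((1 - e) * F0 (z t) k + e * F1 (z t) k)
    & forall k, z 0 k = xb 0 k].

Lemma relaxed_deriv_tube : exists rho L M, [/\ 0 < rho, 0 <= L, 0 <= M &
  forall e t y k, 0 <= e -> 0 <= t <= T -> vnorm (vsub y (xb t)) < rho ->
    Rabs ((1 - e) * F0 y k + e * F1 y k - F0 (xb t) k) <= L * vnorm (vsub y (xb t)) + e * M].
Proof.
have [rho1 [Hrho1 HR1]] := exists_common_delta (P := fun k r => forall s y, 0 <= s <= T ->
    vnorm (vsub y (xb s)) < r -> Rabs (F0 y k - F0 (xb s) k
      - dot (DF0 (xb s) k) (vsub y (xb s))) <= 1 * vnorm (vsub y (xb s)))
  ltac:(move=> k a a' ha hP s y hs hy; apply: hP => //; lra)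
  ltac:(move=> k; apply: (@fdiff_unif_along n (fun y => F0 y k) (fun y => DF0 y k) xb T) => //; lra).
pose G y k := F1 y k - F0 y k.
have HGc y k : vcont (fun y => G y k) y by apply: vcont_minus.
have [rho2 [Hrho2 HR2]] := exists_common_delta (P := fun k r => forall s y, 0 <= s <= T ->
    vnorm (vsub y (xb s)) < r -> Rabs (G y k - G (xb s) k) < 1)
  ltac:(move=> k a a' ha hP s y hs hy; apply: hP => //; lra)
  ltac:(move=> k; apply: (@vcont_unif_along n (fun y => G y k) xb T) => //; lra).
have [Dm [HDm0 HDm]] := continuity_pt_ub_family (G := fun k s => l1norm (DF0 (xb s) k))
  (Rlt_le _ _ HT) ltac:(move=> k x; apply: continuity_pt_sum => j;
    apply: (continuity_pt_comp (fun s => DF0 (xb s) k j) Rabs _ _ (Rcontinuity_abs _));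
    apply: (continuity_pt_vcont_comp (G := fun y => DF0 y k j)) => //; exact: HDF0).
have [M0 [HM0 HGb]] := continuity_pt_ub_family (G := fun k s => G (xb s) k)
  (Rlt_le _ _ HT) ltac:(move=> k x; exact: (continuity_pt_vcont_comp (G := fun y => G y k))).
exists (Rmin rho1 rho2), (1 + Dm), (M0 + 1); split; [exact: Rmin_pos | lra | lra |].
move=> e t y k he ht hy; set v := vnorm (vsub y (xb t)).
have h1 := HR1 k t y ht (Rlt_le_trans _ _ _ hy (Rmin_l _ _)).
have h2 := HR2 k t y ht (Rlt_le_trans _ _ _ hy (Rmin_r _ _)).
have h3 : Rabs (dot (DF0 (xb t) k) (vsub y (xb t))) <= v * Dm.
  rewrite dotC; apply: Rle_trans (Rabs_dot_le (B := v) _ _) _.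
    by move=> j; exact: Rabs_le_vnorm.
  apply: Rmult_le_compat_l; first exact: vnorm_ge0.
  by apply: Rle_trans (Rle_abs _) (HDm k t ht).
have h4 := HGb k t ht.
have -> : (1 - e) * F0 y k + e * F1 y k - F0 (xb t) k =
   (F0 y k - F0 (xb t) k - dot (DF0 (xb t) k) (vsub y (xb t)))
   + dot (DF0 (xb t) k) (vsub y (xb t)) + e * ((G y k - G (xb t) k) + G (xb t) k).
  by rewrite /G; ring.
apply: Rle_trans (Rabs_triang _ _) _.
have := Rabs_triang (F0 y k - F0 (xb t) k - dot (DF0 (xb t) k) (vsub y (xb t)))
  (dot (DF0 (xb t) k) (vsub y (xb t))).
rewrite Rabs_mult (Rabs_right e); last lra.
have := Rabs_triang (G y k - G (xb t) k) (G (xb t) k).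
rewrite -/v in h1 *; nra.
Qed.

Lemma relaxed_sol_close : exists K e1, [/\ 0 < K, 0 < e1 &
  forall e z, 0 < e -> e < e1 -> relaxed_sol e z ->
    forall t, 0 <= t <= T -> vnorm (vsub (z t) (xb t)) <= K * e].
Proof.
have [rho [L [M [Hrho HL HM Htube]]]] := relaxed_deriv_tube.
have [K [e1 [HK [He1 Hgr]]]] := vnorm_le_of_tube_deriv n HT Hrho HL HM.
exists K, e1; split => // e z he hee1 [Hzc Hzd Hz0].
apply: (Hgr e _ (fun t k => (1 - e) * F0 (z t) k + e * F1 (z t) k - F0 (xb t) k)) => //.
- by move=> t k; apply: continuity_pt_minus.
- by move=> t ht k; apply: derivable_pt_lim_minus; [exact: Hzd | exact: Hxbd].
- by move=> t ht hv k; apply: Htube => //; lra.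
- by move=> k; rewrite /vsub Hz0; ring.
Qed.

Definition first_variation t :=
  dot (vsub (F1 (xb t)) (F0 (xb t))) (lam t) + r1 (xb t) - r0 (xb t).

(* The derivative of [t |-> lam t . (z t - xb t)] along a relaxed solution [z],
   computed with the adjoint equation. *)
Definition pairing_deriv e (z : R -> vec n) t :=
  \big[Rplus/0]_(k < n) (lam t k * (F0 (z t) k - F0 (xb t) k
                                    - dot (DF0 (xb t) k) (vsub (z t) (xb t))))
  - dot (Dr0 (xb t)) (vsub (z t) (xb t))
  + e * \big[Rplus/0]_(k < n) (lam t k * (F1 (z t) k - F0 (z t) k)).

Lemma continuity_pt_first_variation x : continuity_pt first_variation x.
Proof.
apply: continuity_pt_minus; last exact: continuity_pt_vcont_comp.
apply: continuity_pt_plus; last exact: continuity_pt_vcont_comp.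
apply: continuity_pt_dot => // k; apply: continuity_pt_minus.
  exact: (continuity_pt_vcont_comp (G := fun y => F1 y k)).
exact: (continuity_pt_vcont_comp (G := fun y => F0 y k)).
Qed.

Lemma continuity_pt_pairing_deriv e z : relaxed_sol e z ->
  forall x, continuity_pt (pairing_deriv e z) x.
Proof.
case=> Hzc _ _ x.
have Hd t k : continuity_pt (fun s => vsub (z s) (xb s) k) t by apply: continuity_pt_minus.
have HF0z k : continuity_pt (fun s => F0 (z s) k) x.
  exact: (continuity_pt_vcont_comp (G := fun y => F0 y k)).
have HF0b k : continuity_pt (fun s => F0 (xb s) k) x.
  exact: (continuity_pt_vcont_comp (G := fun y => F0 y k)).
apply: continuity_pt_plus; first apply: continuity_pt_minus.
- apply: continuity_pt_sum => k; apply: continuity_pt_mult => //.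
  apply: continuity_pt_minus; first exact: continuity_pt_minus.
  apply: continuity_pt_dot => // j.
  by apply: (continuity_pt_vcont_comp (G := fun y => DF0 y k j)).
- by apply: continuity_pt_dot => // j; apply: (continuity_pt_vcont_comp (G := fun y => Dr0 y j)).
- apply: continuity_pt_mult; first exact: continuity_pt_cst.
  apply: continuity_pt_sum => k; apply: continuity_pt_mult => //.
  by apply: continuity_pt_minus => //; apply: (continuity_pt_vcont_comp (G := fun y => F1 y k)).
Qed.

Lemma adjoint_duality e z : relaxed_sol e z ->
  dot (lam T) (vsub (z T) (xb T)) = RInt (pairing_deriv e z) 0 T.
Proof.
move=> Hz; case: (Hz) => Hzc Hzd Hz0.
pose h t := dot (lam t) (vsub (z t) (xb t)).
have Hhc x : continuity_pt h x by apply: continuity_pt_dot => // k; apply: continuity_pt_minus.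
have Hhd t : 0 < t < T -> derivable_pt_lim h t (pairing_deriv e z t).
  move=> ht.
  have Hdd k : derivable_pt_lim (fun s => vsub (z s) (xb s) k) t
      ((1 - e) * F0 (z t) k + e * F1 (z t) k - F0 (xb t) k).
    by apply: derivable_pt_lim_minus; [exact: Hzd | exact: Hxbd].
  have := derivable_pt_lim_sum (fun k => derivable_pt_lim_mult _ _ t _ _ (Hlamd ht k) (Hdd k)).
  congr derivable_pt_lim.
  rewrite (eq_bigr (fun k =>
     (lam t k * (F0 (z t) k - F0 (xb t) k)
      - (\big[Rplus/0]_(j < n) (DF0 (xb t) j k * lam t j)) * vsub (z t) (xb t) k)
     - Dr0 (xb t) k * vsub (z t) (xb t) k
     + e * (lam t k * (F1 (z t) k - F0 (z t) k)))); last first.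
    by move=> k _ /=; set S := \big[_/_]_(_ < _) _; ring.
  rewrite big_split !sum_minus -big_distrr sum_transpose /pairing_deriv /dot /=.
  rewrite -sum_minus; congr (_ - _ + _).
  by apply: eq_bigr => k _; set S := \big[_/_]_(_ < _) _; ring.
have := RInt_derivable_pt_lim HT Hhc (continuity_pt_pairing_deriv Hz) Hhd.
have -> : h 0 = 0.
  rewrite /h /dot (eq_bigr (fun _ => 0)) ?sum_const; first ring.
  by move=> k _; rewrite /vsub Hz0; ring.
by rewrite Rminus_0_r.
Qed.

(* What is left of the payoff increment once the first variation and the
   adjoint pairing are taken out: first-order Taylor remainders of [r0] and
   [F0] at [xb s], and [e] times the variation of [r1 - r0] and [F1 - F0]. *)
Definition taylor_gap e s (y : vec n) :=
  (r0 y - r0 (xb s) - dot (Dr0 (xb s)) (vsub y (xb s)))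
  + \big[Rplus/0]_(k < n) (lam s k * (F0 y k - F0 (xb s) k
                                      - dot (DF0 (xb s) k) (vsub y (xb s))))
  + e * ((r1 y - r0 y) - (r1 (xb s) - r0 (xb s)))
  + e * \big[Rplus/0]_(k < n) (lam s k * ((F1 y k - F0 y k) - (F1 (xb s) k - F0 (xb s) k))).

Lemma taylor_gap_small eps : 0 < eps -> exists rho, 0 < rho /\
  forall e s y, 0 <= e -> 0 <= s <= T -> vnorm (vsub y (xb s)) < rho ->
    Rabs (taylor_gap e s y) <= eps * (vnorm (vsub y (xb s)) + e).
Proof.
move=> Heps.
have hn := pos_INR n.
have [Lam [HLam0 HLam]] := continuity_pt_ub_family (G := fun k s => lam s k)
  (Rlt_le _ _ HT) (fun k x => Hlamc x k).
pose eps1 := eps / (1 + INR n * Lam).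
have hnL : 0 <= INR n * Lam by nra.
have He1 : 0 < eps1 by apply: Rdiv_lt_0_compat; lra.
have [rhoa [Hra HRa]] := @fdiff_unif_along n r0 Dr0 xb T Hr0 HDr0 Hxbc eps1 He1.
have [rhob [Hrb HRb]] := exists_common_delta (P := fun k r => forall s y, 0 <= s <= T ->
    vnorm (vsub y (xb s)) < r -> Rabs (F0 y k - F0 (xb s) k
      - dot (DF0 (xb s) k) (vsub y (xb s))) <= eps1 * vnorm (vsub y (xb s)))
  ltac:(move=> k a a' ha hP s y hs hy; apply: hP => //; lra)
  ltac:(move=> k; exact: (@fdiff_unif_along n (fun y => F0 y k) (fun y => DF0 y k) xb T)).
have [rhoc [Hrc HRc]] := @vcont_unif_along n (fun y => r1 y - r0 y) xb T
  (fun y => vcont_minus (Hr1 y) (Hr0c y)) Hxbc eps1 He1.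
have [rhod [Hrd HRd]] := exists_common_delta (P := fun k r => forall s y, 0 <= s <= T ->
    vnorm (vsub y (xb s)) < r ->
    Rabs ((F1 y k - F0 y k) - (F1 (xb s) k - F0 (xb s) k)) < eps1)
  ltac:(move=> k a a' ha hP s y hs hy; apply: hP => //; lra)
  ltac:(move=> k; apply: (@vcont_unif_along n (fun y => F1 y k - F0 y k) xb T) => // y;
        exact: vcont_minus).
exists (Rmin (Rmin rhoa rhob) (Rmin rhoc rhod)).
split; first by repeat apply: Rmin_pos.
move=> e s y he hs; set v := vnorm (vsub y (xb s)) => hv.
have hva : v < rhoa by apply: Rlt_le_trans hv _; apply: Rle_trans (Rmin_l _ _) (Rmin_l _ _).
have hvb : v < rhob by apply: Rlt_le_trans hv _; apply: Rle_trans (Rmin_l _ _) (Rmin_r _ _).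
have hvc : v < rhoc by apply: Rlt_le_trans hv _; apply: Rle_trans (Rmin_r _ _) (Rmin_l _ _).
have hvd : v < rhod by apply: Rlt_le_trans hv _; apply: Rle_trans (Rmin_r _ _) (Rmin_r _ _).
have hv0 : 0 <= v := vnorm_ge0 _.
have lam_sum_le (g : 'I_n -> R) c : (forall k, Rabs (g k) <= c) ->
    Rabs (\big[Rplus/0]_(k < n) (lam s k * g k)) <= INR n * (Lam * c).
  move=> Hg; apply: Rle_trans (Rabs_sum_le _) _; apply: sum_le_const => k.
  rewrite Rabs_mult; apply: Rmult_le_compat; try exact: Rabs_pos; [exact: HLam | exact: Hg].
have b1 := HRa s y hs hva.
have b2 := lam_sum_le _ _ (fun k => HRb k s y hs hvb).
have b3 := HRc s y hs hvc.
have b4 := lam_sum_le _ _ (fun k => Rlt_le _ _ (HRd k s y hs hvd)).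
rewrite /taylor_gap; move: b1 b2 b3 b4; rewrite -/v.
set A1 := r0 y - _ - _; set A2 := \big[_/_]_(_ < _) _; set A3 := _ - _ - (_ - _).
set A4 := \big[_/_]_(_ < _) _ => b1 b2 b3 b4.
have := Rabs_triang (A1 + A2 + e * A3) (e * A4).
have := Rabs_triang (A1 + A2) (e * A3).
have := Rabs_triang A1 A2.
rewrite !Rabs_mult (Rabs_right e); last lra.
have -> : eps = eps1 * (1 + INR n * Lam) by rewrite /eps1; field; lra.
nra.
Qed.


Lemma taylor_gap_decomp e z t : taylor_gap e t (z t) =
  ((r0 (z t) - r0 (xb t)) + e * (r1 (z t) - r0 (z t)))
  + pairing_deriv e z t - e * first_variation t.
Proof.
rewrite /taylor_gap /pairing_deriv /first_variation.
rewrite [X in _ + e * X = _](_ : _ = \big[Rplus/0]_(k < n) (lam t k * (F1 (z t) k - F0 (z t) k))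
                                 - dot (vsub (F1 (xb t)) (F0 (xb t))) (lam t)).
  set S1 := \big[_/_]_(_ < _) _; set S2 := \big[_/_]_(_ < _) _; ring.
by rewrite /dot -sum_minus; apply: eq_bigr => k _; rewrite /vsub; ring.
Qed.

Section RelaxedSolution.

Variables (e : R) (z : R -> vec n).
Hypothesis Hz : relaxed_sol e z.

Let Cr0z x : continuity_pt (fun t => r0 (z t)) x.
Proof. by case: Hz => Hzc _ _; exact: continuity_pt_vcont_comp. Qed.
Let Cr0b x : continuity_pt (fun t => r0 (xb t)) x.
Proof. exact: continuity_pt_vcont_comp. Qed.
Let Cr1z x : continuity_pt (fun t => r1 (z t)) x.
Proof. by case: Hz => Hzc _ _; exact: continuity_pt_vcont_comp. Qed.
Let Cgap1 x : continuity_pt (fun t => r0 (z t) - r0 (xb t)) x.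
Proof. exact: continuity_pt_minus. Qed.
Let Cgap2 x : continuity_pt (fun t => e * (r1 (z t) - r0 (z t))) x.
Proof. by apply: continuity_pt_mult; [exact: continuity_pt_cst | exact: continuity_pt_minus]. Qed.
Let CD := continuity_pt_pairing_deriv Hz.
Let CI := continuity_pt_first_variation.

Lemma continuity_pt_taylor_gap x : continuity_pt (fun t => taylor_gap e t (z t)) x.
Proof.
have -> : (fun t => taylor_gap e t (z t)) = fun t =>
    ((r0 (z t) - r0 (xb t)) + e * (r1 (z t) - r0 (z t)))
    + pairing_deriv e z t - e * first_variation t.
  by apply: functional_extensionality => t; exact: taylor_gap_decomp.
apply: continuity_pt_minus; last by apply: continuity_pt_mult => //; exact: continuity_pt_cst.
by apply: continuity_pt_plus => //; apply: continuity_pt_plus.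
Qed.

Lemma payoff_expansion : 0 < e ->
  / e * ((1 - e) * (RInt (fun t => r0 (z t)) 0 T + q (z T))
         + e * (RInt (fun t => r1 (z t)) 0 T + q (z T))
         - (RInt (fun t => r0 (xb t)) 0 T + q (xb T)))
  - RInt first_variation 0 T
  = / e * ((q (z T) - q (xb T) - dot (Dq (xb T)) (vsub (z T) (xb T)))
           + RInt (fun t => taylor_gap e t (z t)) 0 T).
Proof.
move=> he.
rewrite (RInt_ext (fun t => taylor_gap e t (z t)) (fun t => ((r0 (z t) - r0 (xb t))
   + e * (r1 (z t) - r0 (z t))) + pairing_deriv e z t - e * first_variation t)); last first.
  by move=> t _; exact: taylor_gap_decomp.
rewrite RInt_minus_cont; last 2 first.
- by move=> x; apply: continuity_pt_plus => //; apply: continuity_pt_plus.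
- by move=> x; apply: continuity_pt_mult => //; exact: continuity_pt_cst.
rewrite (RInt_plus_cont (g := pairing_deriv e z)) //; last first.
  by move=> x; apply: continuity_pt_plus.
rewrite (RInt_plus_cont (f := fun t => r0 (z t) - r0 (xb t))) //.
rewrite (RInt_scal_cont (f := first_variation)) //.
rewrite (RInt_scal_cont (f := fun t => r1 (z t) - r0 (z t))); last first.
  by move=> x; exact: continuity_pt_minus.
rewrite (RInt_minus_cont (f := fun t => r1 (z t)) (g := fun t => r0 (z t))) //.
rewrite (RInt_minus_cont (f := fun t => r0 (z t)) (g := fun t => r0 (xb t))) //.
rewrite -adjoint_duality //.
have -> : dot (lam T) (vsub (z T) (xb T)) = dot (Dq (xb T)) (vsub (z T) (xb T)).
  by apply: eq_bigr => k _; rewrite HlamT.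
by field; lra.
Qed.

End RelaxedSolution.

Lemma relaxed_payoff_limit eps : 0 < eps -> exists alp, 0 < alp /\
  forall e z, 0 < e -> e < alp -> relaxed_sol e z ->
  Rabs (/ e * ((1 - e) * (RInt (fun t => r0 (z t)) 0 T + q (z T))
               + e * (RInt (fun t => r1 (z t)) 0 T + q (z T))
               - (RInt (fun t => r0 (xb t)) 0 T + q (xb T)))
        - RInt first_variation 0 T) < eps.
Proof.
move=> Heps.
have [K [e1 [HK He1 Hclose]]] := relaxed_sol_close.
pose C := K + T * (K + 1).
have HC : 0 <= C by rewrite /C; nra.
pose eps1 := eps / (C + 1).
have Heps1 : 0 < eps1 by apply: Rdiv_lt_0_compat; lra.
have [rhog [Hrg Hgap]] := taylor_gap_small Heps1.
have [rhoq [Hrq HQ]] := Hq Heps1.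
pose rho := Rmin rhog rhoq.
have Hrho : 0 < rho by exact: Rmin_pos.
exists (Rmin e1 (rho / K)); split.
  by apply: Rmin_pos => //; exact: Rdiv_lt_0_compat.
move=> e z he hea Hz.
have hee1 : e < e1 := Rlt_le_trans _ _ _ hea (Rmin_l _ _).
have hKe : K * e < rho.
  have -> : rho = K * (rho / K) by field; lra.
  exact: Rmult_lt_compat_l HK (Rlt_le_trans _ _ _ hea (Rmin_r _ _)).
have Hv t : 0 <= t <= T -> vnorm (vsub (z t) (xb t)) <= K * e := Hclose e z he hee1 Hz t.
have hrg : rho <= rhog := Rmin_l _ _.
have hrq : rho <= rhoq := Rmin_r _ _.
rewrite payoff_expansion //.
set Q := q (z T) - _ - _; set G := RInt _ 0 T.
have HQe : Rabs Q <= eps1 * (K * e).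
  have hvT := Hv T (conj (Rlt_le _ _ HT) (Rle_refl T)).
  have := HQ (vsub (z T) (xb T)) ltac:(lra); rewrite vadd_vsub => h.
  by apply: Rle_trans h _; apply: Rmult_le_compat_l; lra.
have HGe : Rabs G <= (T - 0) * (eps1 * (K * e + e)).
  apply: abs_RInt_le_const; first lra.
    exact: ex_RInt_continuity_pt (continuity_pt_taylor_gap Hz).
  move=> t ht; have hvt := Hv t ht.
  apply: Rle_trans (Hgap e t (z t) (Rlt_le _ _ he) ht ltac:(lra)) _.
  by apply: Rmult_le_compat_l; lra.
have Htot : Rabs (Q + G) <= e * (eps1 * C).
  by apply: Rle_trans (Rabs_triang _ _) _; rewrite /C; nra.
have hC : eps1 * C < eps.
  rewrite /eps1; have -> : eps / (C + 1) * C = eps * (C / (C + 1)) by field; lra.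
  have : C / (C + 1) < 1.
    by apply: (Rmult_lt_reg_r (C + 1)); [lra | field_simplify; lra].
  nra.
rewrite Rabs_mult Rabs_inv (Rabs_right e); last lra.
apply: Rle_lt_trans (Rmult_le_compat_l _ _ _ (Rlt_le _ _ (Rinv_0_lt_compat _ he)) Htot) _.
by rewrite -Rmult_assoc Rinv_l; lra.
Qed.

End Relaxation.

Lemma ode_sol_clamp n T (F : vec n -> vec n) z0 z : 0 < T -> ode_sol T F z0 z ->
  [/\ forall t k, continuity_pt (fun s => z (clamp 0 T s) k) t,
      forall t, 0 < t < T -> forall k,
        derivable_pt_lim (fun s => z (clamp 0 T s) k) t (F (z (clamp 0 T t)) k)
    & forall k, z (clamp 0 T 0) k = z0 k].
Proof.
move=> HT [Hz0 [Hzc Hzd]]; have [Hc Hd] := clamp_curve HT Hzc Hzd.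
split => // [t ht k|k]; last by rewrite clamp_id //; lra.
by rewrite (clamp_id (t := t)) //; [exact: Hd | lra].
Qed.

Lemma integ_clamp n T (G : vec n -> R) (z : R -> vec n) : 0 <= T -> (forall y, vcont G y) ->
  (forall t k, continuity_pt (fun s => z (clamp 0 T s) k) t) ->
  integ (fun t => G (z t)) 0 T = RInt (fun t => G (z (clamp 0 T t))) 0 T.
Proof.
move=> HT HG Hzc.
have Hc x : continuity_pt (fun t => G (z (clamp 0 T t))) x.
  exact: continuity_pt_vcont_comp.
have [Hex <-] := RInt_agree (h := fun t => G (z t)) HT Hc
  ltac:(by move=> t ht /=; rewrite clamp_id).
exact: integ_RInt.
Qed.

Lemma relaxed_increment_limit n T (F0 F1 : vec n -> vec n) (DF0 : vec n -> 'I_n -> vec n)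
  (r0 r1 : vec n -> R) (Dr0 : vec n -> vec n) (q : vec n -> R) (Dq : vec n -> vec n)
  (x0 : vec n) (xb lam : R -> vec n) (xe : R -> R -> vec n) : 0 < T ->
  (forall y k, fdiff (fun y => F0 y k) y (DF0 y k)) ->
  (forall y k j, vcont (fun y => DF0 y k j) y) ->
  (forall y k, vcont (fun y => F1 y k) y) ->
  (forall y, fdiff r0 y (Dr0 y)) ->
  (forall y k, vcont (fun y => Dr0 y k) y) ->
  (forall y, vcont r1 y) ->
  fdiff q (xb T) (Dq (xb T)) ->
  ode_sol T F0 x0 xb ->
  adjoint_sol T DF0 Dr0 Dq xb lam ->
  (forall e, 0 < e <= 1 ->
     ode_sol T (fun y => vadd (vscale (1 - e) (F0 y)) (vscale e (F1 y))) x0 (xe e)) ->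
  let I t := dot (vsub (F1 (xb t)) (F0 (xb t))) (lam t) + r1 (xb t) - r0 (xb t) in
  ex_RInt I 0 T /\
  forall eps, 0 < eps -> exists alp, 0 < alp /\ forall e, 0 < e <= 1 -> e < alp ->
    Rabs (/ e * ((1 - e) * (integ (fun t => r0 (xe e t)) 0 T + q (xe e T))
                 + e * (integ (fun t => r1 (xe e t)) 0 T + q (xe e T))
                 - (integ (fun t => r0 (xb t)) 0 T + q (xb T))) - RInt I 0 T) < eps.
Proof.
move=> HT HF0 HDF0 HF1 Hr0 HDr0 Hr1 Hq Hxb [HlamT [Hlamc Hlamd]] Hxe I.
have HT' : 0 <= T by lra.
have CT : clamp 0 T T = T by apply: clamp_id; lra.
pose C := clamp 0 T.
have [Hxbc Hxbd Hxb0] := ode_sol_clamp HT Hxb.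
have [Hlamc' Hlamd'] := clamp_curve HT Hlamc Hlamd.
have Hlamd'' t : 0 < t < T -> forall k, derivable_pt_lim (fun s => lam (C s) k) t
    (- (\big[Rplus/0]_(j < n) (DF0 (xb (C t)) j k * lam (C t) j) + Dr0 (xb (C t)) k)).
  by move=> ht k; rewrite /C clamp_id; [exact: Hlamd' | lra].
have HlamT' k : lam (C T) k = Dq (xb (C T)) k by rewrite /C CT.
have Hq' : fdiff q (xb (C T)) (Dq (xb (C T))) by rewrite /C CT.
have Hrelax e : 0 < e <= 1 -> relaxed_sol T F0 F1 (fun t => xb (C t)) e (fun t => xe e (C t)).
  move=> he; have [Hc Hd H0] := ode_sol_clamp HT (Hxe e he).
  by split => // k; rewrite H0 Hxb0.
have Hr0c y : vcont r0 y := fdiff_vcont (Hr0 y).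
have [HIex HIeq] := RInt_agree (h := I) HT'
  (continuity_pt_first_variation HF0 HF1 Hr0 Hr1 Hxbc Hlamc')
  ltac:(by move=> t ht; rewrite /first_variation /C /= clamp_id).
split => // eps Heps.
have [alp [Halp Hlim]] := relaxed_payoff_limit HT HF0 HDF0 HF1 Hr0 HDr0 Hr1 Hq'
  Hxbc Hxbd Hlamc' Hlamd'' HlamT' Heps.
exists (Rmin alp 1); split; first by apply: Rmin_pos; lra.
move=> e he hea; have [Hec _ _] := Hrelax e he.
rewrite HIeq !(integ_clamp (T := T)) //.
have := Hlim e (fun t => xe e (C t)) (proj1 he)
  (Rlt_le_trans _ _ _ hea (Rmin_l _ _)) (Hrelax e he).
by rewrite /C CT.
Qed.

Lemma limit1_in_right (g : R -> R) l :
  (forall eps, 0 < eps -> exists alp, 0 < alp /\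
     forall e, 0 < e <= 1 -> e < alp -> Rabs (g e - l) < eps) ->
  limit1_in g (fun e => 0 < e <= 1) l 0.
Proof.
move=> H eps Heps; have [alp [Halp Hg]] := H eps Heps.
exists (Rmin alp 1); split; first by apply: Rmin_pos; lra.
move=> e [he /= hd]; rewrite /R_dist Rminus_0_r Rabs_right in hd; last lra.
exact: Hg he (Rlt_le_trans _ _ _ hd (Rmin_l _ _)).
Qed.

Definition flip_bit m (a : 'I_m -> bool) (i : 'I_m) : 'I_m -> bool :=
  fun j => if j == i then ~~ a i else a j.

Lemma bctrl_flip_bit m (a : 'I_m -> bool) i :
  bctrl (flip_bit a i) = if a i then vsub (bctrl a) (ebasis i) else vadd (bctrl a) (ebasis i).
Proof.
apply: functional_extensionality => j; rewrite /bctrl /flip_bit /ebasis /vsub /vadd.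
by case: (eqVneq j i) => [->|/negbTE Hji]; case Ha: (a i) => /=; rewrite ?Ha ?eqxx ?Hji; ring.
Qed.

Unset Implicit Arguments. Set Strict Implicit.

Theorem theorem1 (n m : nat) (T : R) (HT : 0 < T)
  (X : vec n -> Prop) (x0 : vec n) (Hx0 : X x0)
  (f : vec n -> vec m -> vec n) (r : vec n -> vec m -> R) (q : vec n -> R)
  (Df : vec n -> vec m -> 'I_n -> vec n)
  (D2f : vec n -> vec m -> 'I_n -> 'I_n -> vec n)
  (Dr : vec n -> vec m -> vec n) (Dq : vec n -> vec n)
  (A1 : forall a : 'I_m -> bool,
     C2_with (fun y => f y (bctrl a)) (fun y => Df y (bctrl a)) (fun y => D2f y (bctrl a))
     /\ lipschitz_on X (fun y => f y (bctrl a)))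
  (A3 : (forall a : 'I_m -> bool, C1_with (fun y => r y (bctrl a)) (fun y => Dr y (bctrl a)))
        /\ C1_with q Dq)
  (abar : 'I_m -> bool) (i : 'I_m)
  (xb : R -> vec n) (Hxb : ode_sol T (fun y => f y (bctrl abar)) x0 xb)
  (lam : R -> vec n)
  (Hlam : adjoint_sol T (fun y => Df y (bctrl abar)) (fun y => Dr y (bctrl abar)) Dq xb lam)
  (xe : R -> R -> vec n)
  (Hxe : forall e, 0 <= e <= 1 ->
     ode_sol T
       (fun y => vadd (vscale (1 - e) (f y (bctrl abar)))
                      (vscale e (f y (if abar i then vsub (bctrl abar) (ebasis i)
                                                else vadd (bctrl abar) (ebasis i)))))
       x0 (xe e)) :
  (abar i = false ->
     let a1 := vadd (bctrl abar) (ebasis i) in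
     limit1_in
       (fun e => / e * ((1 - e) * Jfun T r q (xe e) (bctrl abar) + e * Jfun T r q (xe e) a1
                        - Jfun T r q xb (bctrl abar)))
       (fun e => 0 < e <= 1)
       (integ (fun t => dot (vsub (f (xb t) a1) (f (xb t) (bctrl abar))) (lam t)
                        + r (xb t) a1 - r (xb t) (bctrl abar)) 0 T)
       0)
  /\
  (abar i = true ->
     let a0 := vsub (bctrl abar) (ebasis i) in
     limit1_in
       (fun e => / e * (Jfun T r q xb (bctrl abar)
                        - ((1 - e) * Jfun T r q (xe e) (bctrl abar) + e * Jfun T r q (xe e) a0)))
       (fun e => 0 < e <= 1)
       (integ (fun t => dot (vsub (f (xb t) (bctrl abar)) (f (xb t) a0)) (lam t)
                        + r (xb t) (bctrl abar) - r (xb t) a0) 0 T)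
       0).
Proof.
pose a' := flip_bit abar i.
have [[HF0 [HDF0 _]] _] := A1 abar.
have [[HF1 _] _] := A1 a'.
have [HrA [Hq _]] := A3.
have [Hr0 HDr0] := HrA abar.
have [Hr1 _] := HrA a'.
have Hxe' e : 0 < e <= 1 -> ode_sol T
    (fun y => vadd (vscale (1 - e) (f y (bctrl abar))) (vscale e (f y (bctrl a')))) x0 (xe e).
  by move=> he; rewrite bctrl_flip_bit; apply: Hxe; lra.
have [Hex Hlim] := relaxed_increment_limit HT HF0
  (fun y k j => fdiff_vcont (HDF0 y k j)) (fun y k => fdiff_vcont (HF1 y k)) Hr0 HDr0
  (fun y => fdiff_vcont (Hr1 y)) (Hq (xb T)) Hxb Hlam Hxe'.
split => Hi /=.
- have -> : vadd (bctrl abar) (ebasis i) = bctrl a' by rewrite bctrl_flip_bit Hi.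
  by rewrite integ_RInt //; exact: limit1_in_right.
- have -> : vsub (bctrl abar) (ebasis i) = bctrl a' by rewrite bctrl_flip_bit Hi.
  have -> : (fun t => dot (vsub (f (xb t) (bctrl abar)) (f (xb t) (bctrl a'))) (lam t)
                      + r (xb t) (bctrl abar) - r (xb t) (bctrl a'))
      = fun t => opp (dot (vsub (f (xb t) (bctrl a')) (f (xb t) (bctrl abar))) (lam t)
                      + r (xb t) (bctrl a') - r (xb t) (bctrl abar)).
    by apply: functional_extensionality => t; rewrite /opp /= !dot_vsubl; ring.
  rewrite (integ_RInt (ex_RInt_opp _ _ _ Hex)) (RInt_opp _ _ _ Hex).
  apply: limit1_in_right => eps /Hlim [alp [Halp Hl]]; exists alp; split => // e he hea.
  rewrite -Rabs_Ropp; move: (Hl e he hea); congr (Rabs _ < _).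
  by rewrite /opp /Jfun /=; ring.
Qed.
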